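(* Let $012345$ be a convex hexagon with area $A$. Suppose that all six vertex triangles (the triangles with vertices $i-1,i,i+1$, indices mod $6$) have the same area $k$, and that the triangle $013$ has area $\lambda k$. Then $$(\lambda-1)A^2-(\lambda^2+4\lambda-4)kA+2(\lambda^2+2\lambda-2)k^2=0,$$ or equivalently $$A=\frac{\lambda^2+2\lambda-2}{\lambda-1}\,k.$$
   Context: The vertices of the hexagon are labelled $0,\dots,5$ in cyclic order. *)

From mathcomp Require Import all_boot all_order all_algebra.
Set Implicit Arguments. Unset Strict Implicit. Unset Printing Implicit Defensive.
Import Order.TTheory GRing.Theory Num.Theory.
Local Open Scope ring_scope.

(* Twice the signed area of triangle abc (positive iff a,b,c counterclockwise). *)
Definition orient {R : realFieldType} (a b c : R * R) : R :=
  (b.1 - a.1) * (c.2 - a.2) - (b.2 - a.2) * (c.1 - a.1).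

Definition tri_area {R : realFieldType} (a b c : R * R) : R := `|orient a b c| / 2.

(* Area of the polygon with vertices p 0, ..., p (n-1) (shoelace formula);
   equals the usual area when the polygon is simple (e.g. convex). *)
Definition poly_area {R : realFieldType} {n : nat} (p : 'I_n.+1 -> R * R) : R :=
  `| \sum_(i < n.+1) ((p i).1 * (p (ordS i)).2 - (p (ordS i)).1 * (p i).2) | / 2.

(* Strict convexity of a polygon whose vertices are listed in cyclic order:
   every three vertices, taken in the cyclic order, are all counterclockwise
   or all clockwise. *)
Definition convex_polygon {R : realFieldType} {n : nat} (p : 'I_n -> R * R) : Prop :=
  (forall i j l : 'I_n, (i < j)%N -> (j < l)%N -> 0 < orient (p i) (p j) (p l)) \/
  (forall i j l : 'I_n, (i < j)%N -> (j < l)%N -> orient (p i) (p j) (p l) < 0).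

From mathcomp Require Import all_boot all_order all_algebra.
From mathcomp Require Import ring lra zify.
Set Implicit Arguments. Unset Strict Implicit.
Import Order.TTheory GRing.Theory Num.Theory.
Local Open Scope ring_scope.

(* Equal vertex triangles mean equal turns: orient P(i-1) P(i) P(i+1) = c = 2k for all i.
   The affine map sending P0, P1, P2 to (0,0), (1,0), (1,1) divides every orientation by c,
   and in these coordinates the turn conditions together with convexity force
   P3 = (0, l), P4 = (-1/(l-1), l), P5 = (-1/(l-1), 1), where l = orient P0 P1 P3 / c is
   the lambda of the statement: opposite sides are parallel.  Triangulating from P0 then
   gives 2A/c = 2 + l + l/(l-1), i.e. (lambda - 1) A = (lambda^2 + 2 lambda - 2) k, and the
   quadratic of the statement is this relation multiplied by A - 2k.  Clockwise hexagons are
   reduced to counterclockwise ones by a reflection. *)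

Section Orientation.

Variable R : realFieldType.
Implicit Types a b c x y z : R * R.

Lemma orient_rotate a b c : orient a b c = orient b c a.
Proof. by rewrite /orient; ring. Qed.

Lemma orient_xxy x y : orient x x y = 0.
Proof. by rewrite /orient; ring. Qed.

Lemma tri_area_ccw a b c : 0 < orient a b c -> 2 * tri_area a b c = orient a b c.
Proof. by move=> o_gt0; rewrite /tri_area gtr0_norm //; field. Qed.

Definition mirror x : R * R := (x.1, - x.2).

Lemma orient_mirror a b c : orient (mirror a) (mirror b) (mirror c) = - orient a b c.
Proof. by rewrite /orient /=; ring. Qed.

Lemma tri_area_mirror a b c : tri_area (mirror a) (mirror b) (mirror c) = tri_area a b c.
Proof. by rewrite /tri_area orient_mirror normrN. Qed.

Lemma poly_area_mirror n (p : 'I_n.+1 -> R * R) :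
  poly_area (fun i => mirror (p i)) = poly_area p.
Proof.
rewrite /poly_area -normrN -sumrN; congr (`|_| / 2).
by apply: eq_bigr => i _; rewrite /=; ring.
Qed.

Lemma poly_area_ccw n (p : 'I_n.+1 -> R * R) :
  (forall i j l : 'I_n.+1, (i < j)%N -> (j < l)%N -> 0 < orient (p i) (p j) (p l)) ->
  2 * poly_area p = \sum_i orient (p ord0) (p i) (p (ordS i)).
Proof.
move=> ccw.
pose g x := (p ord0).1 * x.2 - (p ord0).2 * x.1.
have fan : \sum_i ((p i).1 * (p (ordS i)).2 - (p (ordS i)).1 * (p i).2)
    = \sum_i orient (p ord0) (p i) (p (ordS i)).
  have g_cycle : \sum_i (g (p (ordS i)) - g (p i)) = 0.
    by rewrite sumrB [X in _ - X](reindex_inj (@ordS_inj _)) subrr.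
  rewrite (eq_bigr (fun i => orient (p ord0) (p i) (p (ordS i)) + (g (p (ordS i)) - g (p i)))).
    by rewrite big_split /= g_cycle addr0.
  by move=> i _; rewrite /g /orient; ring.
rewrite /poly_area fan ger0_norm; first by field.
apply: sumr_ge0 => i _.
have [i0 | i_gt0] := posnP i.
  by rewrite (_ : i = ord0) ?orient_xxy //; apply: val_inj.
have [i_lt_n | i_ge_n] := ltnP i n.
  by apply/ltW/ccw => //=; rewrite modn_small.
have i_eq_n : i = n :> nat by have := ltn_ord i; lia.
have -> : ordS i = ord0 by apply: val_inj; rewrite /= i_eq_n modnn.
by rewrite -orient_rotate orient_xxy.
Qed.

Definition frame a b c x : R * R :=
  ((orient a b x + orient a x c) / orient a b c, orient a b x / orient a b c).

Lemma orient_frame a b c x y z : orient a b c != 0 ->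
  orient (frame a b c x) (frame a b c y) (frame a b c z) = orient x y z / orient a b c.
Proof. by move=> abc_neq0; rewrite /frame /orient /=; field. Qed.

Lemma frame_base a b c : orient a b c != 0 ->
  [/\ frame a b c a = (0, 0), frame a b c b = (1, 0) & frame a b c c = (1, 1)].
Proof.
move=> abc_neq0; rewrite /frame; split; congr pair; move: abc_neq0.
all: by rewrite /orient => ?; field.
Qed.

Lemma unit_frame_hexagon (Q3 Q4 Q5 : R * R) :
  orient (1, 0) (1, 1) Q3 = 1 -> orient (1, 1) Q3 Q4 = 1 -> orient Q3 Q4 Q5 = 1 ->
  orient Q4 Q5 (0, 0) = 1 -> orient Q5 (0, 0) (1, 0) = 1 ->
  0 < orient (0, 0) (1, 0) Q3 -> 0 < orient (1, 0) (1, 1) Q4 ->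
  (orient (0, 0) (1, 0) Q3 - 1)
    * (1 + orient (0, 0) (1, 1) Q3 + orient (0, 0) Q3 Q4 + orient (0, 0) Q4 Q5)
  = orient (0, 0) (1, 0) Q3 ^+ 2 + 2 * orient (0, 0) (1, 0) Q3 - 2.
Proof.
case: Q3 Q4 Q5 => [x3 y3] [x4 y4] [x5 y5]; rewrite /orient /=.
move=> turn1 turn2 turn3 turn4 turn5 o013_gt0 o124_gt0.
(* The positivity hypotheses serve only to discard the spurious factors [y3] and [x4 - 1]. *)
have y3_gt0 : 0 < y3 by nra.
have x4_lt1 : x4 < 1 by nra.
have -> : x3 = 0 by nra.
have -> : y5 = 1 by nra.
have y4E : y4 = (1 - y3) * (x4 - 1) by nra.
have x5E : x5 = x4.
  have : y3 * (x5 - x4) = 0 by nra.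
  by move/eqP; rewrite mulf_eq0 subr_eq0 gt_eqF //= => /eqP.
have x4E : (y3 - 1) * x4 = -1.
  have : (x4 - 1) * ((y3 - 1) * x4 + 1) = 0 by rewrite -x5E; nra.
  by move/eqP; rewrite mulf_eq0 subr_eq0 (lt_eqF x4_lt1) addr_eq0 => /eqP.
apply/eqP; rewrite -subr_eq0; apply/eqP.
transitivity (((y3 - 1) * x4 + 1) * ((y3 - 1) * x4 - 1 - 2 * (y3 - 1))).
  by rewrite x5E y4E; ring.
by rewrite x4E addNr mul0r.
Qed.

Lemma equal_turns_hexagon (P0 P1 P2 P3 P4 P5 : R * R) (c : R) : 0 < c ->
  orient P0 P1 P2 = c -> orient P1 P2 P3 = c -> orient P2 P3 P4 = c ->
  orient P3 P4 P5 = c -> orient P4 P5 P0 = c -> orient P5 P0 P1 = c ->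
  0 < orient P0 P1 P3 -> 0 < orient P1 P2 P4 ->
  (orient P0 P1 P3 - c)
    * (orient P0 P1 P2 + orient P0 P2 P3 + orient P0 P3 P4 + orient P0 P4 P5)
  = orient P0 P1 P3 ^+ 2 + 2 * orient P0 P1 P3 * c - 2 * c ^+ 2.
Proof.
move=> c_gt0 turn0 turn1 turn2 turn3 turn4 turn5 o013_gt0 o124_gt0.
have c_neq0 : c != 0 by rewrite gt_eqF.
have [F0 F1 F2] : [/\ frame P0 P1 P2 P0 = (0, 0), frame P0 P1 P2 P1 = (1, 0)
                    & frame P0 P1 P2 P2 = (1, 1)] by apply: frame_base; rewrite turn0.
set F := frame P0 P1 P2 in F0 F1 F2 *.
have oF x y z : orient (F x) (F y) (F z) = orient x y z / c by rewrite orient_frame turn0.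
have := @unit_frame_hexagon (F P3) (F P4) (F P5).
rewrite -F0 -F1 -F2 !oF turn1 turn2 turn3 turn4 turn5 divff //.
move=> /(_ erefl erefl erefl erefl erefl (divr_gt0 o013_gt0 c_gt0) (divr_gt0 o124_gt0 c_gt0)).
move=> /(congr1 ( *%R (c ^+ 2))) key.
by rewrite turn0; apply: etrans (etrans _ key) _; field.
Qed.

End Orientation.

Lemma ccw_hexagon_area_relation (R : realFieldType) (p : 'I_6 -> R * R) (A k lambda : R) :
  (forall i j l : 'I_6, (i < j)%N -> (j < l)%N -> 0 < orient (p i) (p j) (p l)) ->
  A = poly_area p ->
  (forall i : 'I_6, tri_area (p (ord_pred i)) (p i) (p (ordS i)) = k) ->
  tri_area (p (inord 0)) (p (inord 1)) (p (inord 3)) = lambda * k ->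
  0 < k /\ (lambda - 1) * A = (lambda ^+ 2 + 2 * lambda - 2) * k.
Proof.
move=> ccw area_p turn_k tri013.
pose P j := p (inord j).
have pE (i : 'I_6) : p i = P i by rewrite /P inord_val.
have P_gt0 i j l : (i < j < l)%N -> (l < 6)%N -> 0 < orient (P i) (P j) (P l).
  by case/andP=> ij jl l6; apply: ccw; rewrite !inordK //; lia.
have turn j : (j < 6)%N -> orient (P ((j + 5) %% 6)%N) (P j) (P (j.+1 %% 6)%N) = 2 * k.
  move=> j6; rewrite -(turn_k (inord j)) !pE /= !inordK // [(j + 6)%N]addnS /=.
  rewrite tri_area_ccw //.
  case: j j6 => [|[|[|[|[|[|//]]]]]] _; first [by apply: P_gt0
    | by rewrite orient_rotate; apply: P_gt0 | by rewrite -orient_rotate; apply: P_gt0].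
have k_gt0 : 0 < k by have := P_gt0 0 1 2 isT isT; rewrite (turn 1 isT); lra.
have L013 : orient (P 0) (P 1) (P 3) = 2 * (lambda * k).
  by rewrite -tri013 tri_area_ccw ?P_gt0.
have fan : 2 * A = orient (P 0) (P 1) (P 2) + orient (P 0) (P 2) (P 3)
                   + orient (P 0) (P 3) (P 4) + orient (P 0) (P 4) (P 5).
  rewrite area_p poly_area_ccw // !big_ord_recr big_ord0 /= !pE /=.
  by rewrite /orient; ring.
have c_gt0 : 0 < 2 * k by rewrite mulr_gt0.
have := @equal_turns_hexagon R (P 0) (P 1) (P 2) (P 3) (P 4) (P 5) (2 * k) c_gt0
  (turn 1 isT) (turn 2 isT) (turn 3 isT) (turn 4 isT) (turn 5 isT) (turn 0 isT)
  (P_gt0 0 1 3 isT isT) (P_gt0 1 2 4 isT isT).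
rewrite -fan L013 => key; split=> //.
have k4_neq0 : 4 * k != 0 by rewrite mulf_neq0 // lt0r_neq0.
by apply: (mulfI k4_neq0); apply: etrans (etrans _ key) _; ring.
Qed.

Lemma area_relation_solve (F : fieldType) (A k lambda : F) : k != 0 ->
  (lambda - 1) * A = (lambda ^+ 2 + 2 * lambda - 2) * k ->
  (lambda - 1) * A ^+ 2 - (lambda ^+ 2 + 4 * lambda - 4) * k * A
    + 2 * (lambda ^+ 2 + 2 * lambda - 2) * k ^+ 2 = 0
  /\ lambda != 1
  /\ A = (lambda ^+ 2 + 2 * lambda - 2) / (lambda - 1) * k.
Proof.
move=> k_neq0 rel.
have lambda_neq1 : lambda - 1 != 0.
  apply: contra_neq k_neq0 => /subr0_eq lambda1.
  transitivity ((lambda ^+ 2 + 2 * lambda - 2) * k - (lambda - 1) * A).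
    by rewrite lambda1; ring.
  by rewrite rel subrr.
split; last split; last first.
- by apply: (mulfI lambda_neq1); rewrite rel; field.
- by rewrite -subr_eq0.
transitivity (((lambda - 1) * A - (lambda ^+ 2 + 2 * lambda - 2) * k) * (A - 2 * k)).
  by ring.
by rewrite rel subrr mul0r.
Qed.

Theorem corollary4 (R : realFieldType) (p : 'I_6 -> R * R) (A k lambda : R) :
  convex_polygon p ->
  A = poly_area p ->
  (forall i : 'I_6, tri_area (p (ord_pred i)) (p i) (p (ordS i)) = k) ->
  tri_area (p (inord 0)) (p (inord 1)) (p (inord 3)) = lambda * k ->
  (lambda - 1) * A ^+ 2 - (lambda ^+ 2 + 4 * lambda - 4) * k * A
    + 2 * (lambda ^+ 2 + 2 * lambda - 2) * k ^+ 2 = 0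
  /\ lambda != 1
  /\ A = (lambda ^+ 2 + 2 * lambda - 2) / (lambda - 1) * k.
Proof.
move=> convex_p area_p turn_k tri013.
suff [k_gt0 rel] : 0 < k /\ (lambda - 1) * A = (lambda ^+ 2 + 2 * lambda - 2) * k.
  exact: area_relation_solve (lt0r_neq0 k_gt0) rel.
case: convex_p => [ccw | cw]; first exact: ccw_hexagon_area_relation ccw area_p turn_k tri013.
apply: (ccw_hexagon_area_relation (p := fun i => mirror (p i))).
- by move=> i j l ij jl; rewrite orient_mirror oppr_gt0; apply: cw.
- by rewrite poly_area_mirror.
- by move=> i; rewrite tri_area_mirror.
- by rewrite tri_area_mirror.
Qed.
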